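(* Let $(r,\alpha,\beta,L,R)$ and $(r',\alpha',\beta',L',R')$ be $(m,n)$-allowed quintuples with $L\,\Pi(\alpha,\beta)\,R=L'\,\Pi(\alpha',\beta')\,R'$. Then $(r,\alpha,\beta,L,R)=(r',\alpha',\beta',L',R')$.
   Context: $\mathbb{F}$ is the field with two elements, $[n]=\{1,\dots,n\}$, $e_{n,i}$ standard basis column vectors, $I_n$ identity. $P_n=\{(i,j):i,j\in[n],i>j\}$; for transitive $T\subseteq P_n$ ($(i,j),(j,k)\in T\Rightarrow(i,k)\in T$), $L_n(T)=I_n+\mathrm{span}_{\mathbb{F}}\{e_{n,i}e_{n,j}^{\top}:(i,j)\in T\}$. $\Pi(\alpha,\beta)=\sum_{i=1}^re_{m,\alpha(i)}e_{n,\beta(i)}^{\top}\in\mathbb{F}^{m\times n}$. For increasing $\alpha:[r]\to[m]$, $T_L(\alpha)=\{(i,j):j\in\mathrm{Im}(\alpha),i>j\}\subseteq P_m$; for injective $\beta:[r]\to[n]$, $T_R(\beta)=\{(i,j):i\in\mathrm{Im}(\beta),j<i,j\notin\{\beta(1),\dots,\beta(\beta^{-1}(i)-1)\}\}$. A quintuple $(r,\alpha,\beta,L,R)$ is $(m,n)$-allowed if $r\le\min(m,n)$, $\alpha:[r]\to[m]$ is increasing, $\beta:[r]\to[n]$ is injective, $L\in L_m(T_L(\alpha))$, $R\in L_n(T_R(\beta))$. *)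

From mathcomp Require Import all_boot all_algebra.
Set Implicit Arguments. Unset Strict Implicit. Unset Printing Implicit Defensive.
Import GRing.Theory.
Local Open Scope ring_scope.

(* The field with two elements. Indices [n] = {1..n} are represented by
   'I_n = {0..n-1} (shift by one, order-preserving). *)
Notation F2 := 'F_2.

Definition in_L (n : nat) (T : 'I_n -> 'I_n -> bool) (A : 'M[F2]_n) : Prop :=
  exists c : 'I_n -> 'I_n -> F2,
    A = 1%:M + \sum_(i : 'I_n) \sum_(j : 'I_n | T i j) c i j *: delta_mx i j.

Definition Pi (m n r : nat) (alpha : 'I_r -> 'I_m) (beta : 'I_r -> 'I_n)
  : 'M[F2]_(m, n) := \sum_(k < r) delta_mx (alpha k) (beta k).

Definition TL (m r : nat) (alpha : 'I_r -> 'I_m) (i j : 'I_m) : bool :=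
  (j \in codom alpha) && (j < i)%N.

Definition TR (n r : nat) (beta : 'I_r -> 'I_n) (i j : 'I_n) : bool :=
  [exists k : 'I_r, (beta k == i) &&
     [forall l : 'I_r, (l < k)%N ==> (beta l != j)]] && (j < i)%N.

Definition allowed (m n r : nat) (alpha : 'I_r -> 'I_m) (beta : 'I_r -> 'I_n)
  (L : 'M[F2]_m) (R : 'M[F2]_n) : Prop :=
  [/\ (r <= minn m n)%N,
      (forall k l : 'I_r, (k < l)%N -> (alpha k < alpha l)%N),
      injective beta,
      in_L (TL alpha) L &
      in_L (TR beta) R].

(* Put A := L'^-1 L and B := R' R^-1.  Unitriangular matrices supported on a
   transitive strictly lower relation form a group, so A and B are lower
   unitriangular and A Pi(alpha, beta) = Pi(alpha', beta') B.  The entry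
   (alpha k, beta k) of the left side is 1, so the right side has a pivot
   alpha' l = alpha k with beta k <= beta' l; symmetrically every beta' l is
   some beta k with alpha k <= alpha' l.  The two injections k |-> l and
   l |-> k give r = r', monotonicity of alpha and alpha' makes the first one
   the identity, and comparing sums of the beta's gives beta = beta'.
   Finally, in A Pi = Pi B with A in L_m(T_L(alpha)) and B in L_n(T_R(beta)),
   an off-diagonal entry of A in column alpha k would force a nonzero entry of
   B at (beta l, beta k) with k < l, which T_R(beta) excludes; so A = 1, and
   then B = 1. *)

From HB Require Import structures.
From mathcomp Require Import all_boot all_algebra.
From Stdlib Require Import FunctionalExtensionality.
Set Implicit Arguments. Unset Strict Implicit. Unset Printing Implicit Defensive.
Import GRing.Theory.
Local Open Scope ring_scope.

Lemma sumr_neq0 (V : nmodType) (I : finType) (F : I -> V) :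
  \sum_i F i != 0 -> exists i, F i != 0.
Proof.
case: (pickP (fun i => F i != 0)) => [i nz_i|all0]; first by exists i.
by rewrite big1 ?eqxx // => i _; apply/eqP/negbFE/all0.
Qed.

Lemma mulmx_neq0 (R : pzSemiRingType) m n p (X : 'M[R]_(m, n)) (Y : 'M[R]_(n, p)) i j :
  (X *m Y) i j != 0 -> exists2 k, X i k != 0 & Y k j != 0.
Proof.
rewrite mxE => /sumr_neq0[k XYk]; exists k.
  by apply: contraNneq XYk => ->; rewrite mul0r.
by apply: contraNneq XYk => ->; rewrite mulr0.
Qed.

Definition lower {n} : rel 'I_n := fun i j => (j < i)%N.

Lemma lower_trans {n} : transitive (@lower n).
Proof. by move=> j i k ji kj; apply: ltn_trans kj ji. Qed.

Lemma strictly_lower_nilpotent (R : pzSemiRingType) n (N : 'M[R]_n) :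
  (forall i j : 'I_n, (i <= j)%N -> N i j = 0) -> N ^+ n = 0.
Proof.
move=> N_lower.
have Nk0 k (i j : 'I_n) : (i < j + k)%N -> (N ^+ k) i j = 0.
  elim: k i j => [|k IHk] i j.
    by rewrite addn0 expr0 mxE; case: eqP => // ->; rewrite ltnn.
  move=> ij; rewrite exprSr -mulmxE mxE big1 // => l _.
  have [jl|lj] := ltnP j l; last by rewrite N_lower ?mulr0.
  by rewrite IHk ?mul0r // (leq_trans ij) // addnS ltn_add2r.
by apply/matrixP => i j; rewrite mxE Nk0 // (leq_trans (ltn_ord i)) ?leq_addl.
Qed.

Section SupportPattern.
Variables (R : pzRingType) (n : nat) (T : rel 'I_n).

Definition supp_in : {pred 'M[R]_n} :=
  fun X => [forall i, forall j, (X i j != 0) ==> (i == j) || T i j].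

Lemma supp_inP (X : 'M[R]_n) :
  reflect (forall i j, X i j != 0 -> (i == j) || T i j) (X \in supp_in).
Proof. exact: (iffP 'forall_'forall_implyP). Qed.

Definition unitri (X : 'M[R]_n) := X \in supp_in /\ forall i, X i i = 1.

Hypothesis T_lower : subrel T lower.
Hypothesis T_trans : transitive T.

Fact supp_in_subring_closed : subring_closed supp_in.
Proof.
split.
- by apply/supp_inP => i j; rewrite mxE; case: (i == j); rewrite ?mulr0n ?eqxx.
- move=> X Y /supp_inP X_T /supp_inP Y_T; apply/supp_inP => i j.
  rewrite !mxE; have [/X_T //|/negbNE/eqP->] := boolP (X i j != 0).
  by rewrite sub0r oppr_eq0 => /Y_T.
- move=> X Y /supp_inP X_T /supp_inP Y_T; apply/supp_inP => i j.
  rewrite -mulmxE => /mulmx_neq0[k /X_T /orP[/eqP->|Tik] /Y_T //].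
  by case/orP=> [/eqP<-|/(T_trans Tik)->]; rewrite ?Tik ?orbT.
Qed.

HB.instance Definition _ :=
  GRing.isSubringClosed.Build _ supp_in supp_in_subring_closed.

Lemma diag_mulmx (X Y : 'M[R]_n) i : X \in supp_in -> Y \in supp_in ->
  (X *m Y) i i = X i i * Y i i.
Proof.
move=> /supp_inP X_T /supp_inP Y_T; rewrite mxE (bigD1 i) //= big1 ?addr0 // => k ki.
have [Xik0|/X_T] := eqVneq (X i k) 0; first by rewrite Xik0 mul0r.
have [Yki0|/Y_T] := eqVneq (Y k i) 0; first by rewrite Yki0 mulr0.
rewrite (negbTE ki) eq_sym (negbTE ki) /= => /T_lower ik /T_lower ki'.
by have := ltn_trans ik ki'; rewrite ltnn.
Qed.

Lemma unitri_mul (X Y : 'M[R]_n) : unitri X -> unitri Y -> unitri (X *m Y).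
Proof.
move=> [X_T X1] [Y_T Y1]; split; first by rewrite mulmxE rpredM.
by move=> i; rewrite diag_mulmx // X1 Y1 mulr1.
Qed.

(* Neumann series: 1 - X is strictly lower triangular, hence nilpotent. *)
Lemma unitri_inv (X : 'M[R]_n) : unitri X ->
  exists Y, [/\ unitri Y, X *m Y = 1%:M & Y *m X = 1%:M].
Proof.
move=> [X_T X1]; set N := 1%:M - X; set Y := \sum_(k < n) N ^+ k.
have N_T : N \in supp_in by rewrite rpredB ?rpred1.
have Nn : N ^+ n = 0.
  apply: strictly_lower_nilpotent => i j ij; apply/eqP; apply: contraTT ij => Nij.
  move/supp_inP: N_T => /(_ i j Nij) /orP[/eqP eij|/T_lower]; last by rewrite -ltnNge.
  by move: Nij; rewrite eij /N !mxE eqxx X1 subrr eqxx.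
have XY : X * Y = 1.
  have -> : X = - (N - 1) by rewrite opprB subKr.
  by rewrite mulNr -subrX1 Nn sub0r opprK.
have cXY : GRing.comm X Y.
  by apply: commr_sum => k _; apply/commrX/commrB; [apply: commr1 | apply: commr_refl].
have Y_T : Y \in supp_in by rewrite rpred_sum // => k _; rewrite rpredX.
exists Y; split; last 2 first.
- by rewrite mulmxE XY.
- by rewrite mulmxE -cXY XY.
split=> // i; have := diag_mulmx i X_T Y_T.
by rewrite mulmxE XY X1 mul1r mxE eqxx.
Qed.

End SupportPattern.

Lemma unitri_sub (R : pzRingType) n (T T' : rel 'I_n) (X : 'M[R]_n) :
  subrel T T' -> unitri T X -> unitri T' X.
Proof.
move=> TT' [/supp_inP X_T X1]; split => //; apply/supp_inP => i j /X_T.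
by case/orP=> [->|/TT'->]; rewrite ?orbT.
Qed.

Lemma in_L_unitri n (T : rel 'I_n) (A : 'M[F2]_n) :
  subrel T lower -> in_L T A -> unitri T A.
Proof.
move=> T_lower [c ->].
have T_irr i : T i i = false by apply/negP => /T_lower; rewrite /lower ltnn.
have -> : \sum_i \sum_(j | T i j) c i j *: delta_mx i j =
          \matrix_(i, j) (if T i j then c i j else 0) :> 'M_n.
  rewrite [RHS]matrix_sum_delta; apply: eq_bigr => i _.
  rewrite big_mkcond; apply: eq_bigr => j _; rewrite mxE.
  by case: (T i j); rewrite ?scale0r.
split=> [|i]; last by rewrite !mxE eqxx T_irr addr0.
apply/supp_inP => i j; rewrite !mxE.
by case: (T i j); rewrite ?orbT ?addr0 //; case: (i == j); rewrite ?mulr0n ?eqxx.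
Qed.

Lemma TL_lower {n r} {alpha : 'I_r -> 'I_n} : subrel (TL alpha) lower.
Proof. by move=> i j /andP[]. Qed.

Lemma TL_trans {n r} {alpha : 'I_r -> 'I_n} : transitive (TL alpha).
Proof. by move=> j i k /andP[_ ji] /andP[k_a kj]; rewrite /TL k_a (ltn_trans kj ji). Qed.

Lemma TR_lower {n r} {beta : 'I_r -> 'I_n} : subrel (TR beta) lower.
Proof. by move=> i j /andP[]. Qed.

Lemma TR_trans {n r} {beta : 'I_r -> 'I_n} : transitive (TR beta).
Proof.
move=> j i k /andP[/existsP[ki /andP[/eqP bki before_i]] ji].
move=> /andP[/existsP[kj /andP[/eqP bkj before_j]] kj'].
rewrite /TR (ltn_trans kj' ji) andbT; apply/existsP; exists ki; rewrite bki eqxx /=.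
have kikj : (ki <= kj)%N.
  by rewrite leqNgt; apply/negP => /(implyP (forallP before_i kj)); rewrite bkj eqxx.
apply/forallP => l; apply/implyP => lki; apply: (implyP (forallP before_j l)).
exact: leq_trans lki kikj.
Qed.

Lemma TR_before n r (beta : 'I_r -> 'I_n) (k l : 'I_r) :
  injective beta -> (k < l)%N -> ~~ TR beta (beta l) (beta k).
Proof.
move=> beta_inj kl; apply/negP => /andP[/existsP[l' /andP[/eqP/beta_inj-> before]] _].
by have := implyP (forallP before k) kl; rewrite eqxx.
Qed.

Section PiEntries.
Variables (m n r : nat) (alpha : 'I_r -> 'I_m) (beta : 'I_r -> 'I_n).

Lemma Pi_neq0 i j : Pi alpha beta i j != 0 -> exists k, alpha k = i /\ beta k = j.
Proof.
rewrite summxE => /sumr_neq0[k]; rewrite mxE => nz_k; exists k; move: nz_k.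
case: (i =P alpha k) => [->|_]; case: (j =P beta k) => [->|_] //.
all: by rewrite ?andbF mulr0n eqxx.
Qed.

Lemma Pi_col k i : injective beta -> Pi alpha beta i (beta k) = (alpha k == i)%:R.
Proof.
move=> beta_inj; rewrite summxE (bigD1 k) //= big1 => [|l lk]; rewrite mxE.
  by rewrite eqxx andbT eq_sym addr0.
by rewrite (inj_eq beta_inj) (eq_sym k) (negbTE lk) andbF.
Qed.

Lemma Pi_row k j : injective alpha -> Pi alpha beta (alpha k) j = (beta k == j)%:R.
Proof.
move=> alpha_inj; rewrite summxE (bigD1 k) //= big1 => [|l lk]; rewrite mxE.
  by rewrite eqxx eq_sym addr0.
by rewrite (inj_eq alpha_inj) (eq_sym k) (negbTE lk).
Qed.

Lemma mulmx_Pi_col (A : 'M[F2]_m) i k : injective beta ->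
  (A *m Pi alpha beta) i (beta k) = A i (alpha k).
Proof.
move=> beta_inj; rewrite mxE (bigD1 (alpha k)) //= Pi_col // eqxx mulr1.
by rewrite big1 ?addr0 // => l; rewrite Pi_col // eq_sym => /negbTE->; rewrite mulr0.
Qed.

Lemma Pi_mulmx_row (B : 'M[F2]_n) k j : injective alpha ->
  (Pi alpha beta *m B) (alpha k) j = B (beta k) j.
Proof.
move=> alpha_inj; rewrite mxE (bigD1 (beta k)) //= Pi_row // eqxx mul1r.
by rewrite big1 ?addr0 // => l; rewrite Pi_row // eq_sym => /negbTE->; rewrite mul0r.
Qed.

End PiEntries.

Lemma inj_leq_eq (I : finType) (a : I -> nat) (g : I -> I) :
  injective g -> (forall i, a i <= a (g i))%N -> forall i, a (g i) = a i.
Proof.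
move=> g_inj a_le i; apply/esym/eqP.
have sum_ag : (\sum_i a (g i) = \sum_i a i)%N by rewrite [RHS](reindex_inj g_inj).
have := leqif_sum (fun i (_ : true) => leqif_eq (a_le i)).
by rewrite sum_ag => /leqif_refl/forallP/(_ i).
Qed.

Section Increasing.
Variables (r m : nat) (f : 'I_r -> 'I_m).
Hypothesis f_incr : forall k l : 'I_r, (k < l)%N -> (f k < f l)%N.

Lemma incr_mono (k l : 'I_r) : (f k < f l)%N = (k < l)%N.
Proof.
case: (ltngtP k l) => [/f_incr //|/f_incr lk|/val_inj->]; last by rewrite ltnn.
by apply/negbTE; rewrite -leqNgt ltnW.
Qed.

Lemma incr_inj : injective f.
Proof.
by move=> k l fkl; apply: val_inj; case: (ltngtP k l); rewrite // -incr_mono fkl ltnn.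
Qed.

End Increasing.

Lemma incr_ord_id r (f : 'I_r -> 'I_r) :
  (forall k l : 'I_r, (k < l)%N -> (f k < f l)%N) -> f =1 id.
Proof.
move=> f_incr; have le_f p (k : 'I_r) : k = p :> nat -> (p <= f k)%N.
  elim: p k => [//|p IHp] k kp.
  have p_lt_r : (p < r)%N by rewrite -kp ltnW.
  apply: leq_ltn_trans (IHp (Ordinal p_lt_r) erefl) _.
  by apply: f_incr; rewrite /= kp.
by move=> k; apply/val_inj/(inj_leq_eq (incr_inj f_incr)) => l; apply: le_f.
Qed.

Lemma index_maps_eq m n r r' (alpha : 'I_r -> 'I_m) (beta : 'I_r -> 'I_n)
    (alpha' : 'I_r' -> 'I_m) (beta' : 'I_r' -> 'I_n) :
  (forall k l : 'I_r, (k < l)%N -> (alpha k < alpha l)%N) ->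
  (forall k l : 'I_r', (k < l)%N -> (alpha' k < alpha' l)%N) ->
  injective beta' ->
  (forall k, exists l : 'I_r', alpha' l = alpha k /\ (beta k <= beta' l)%N) ->
  (forall l, exists k : 'I_r, beta k = beta' l /\ (alpha k <= alpha' l)%N) ->
  r = r' /\ (forall (k : 'I_r) (k' : 'I_r'),
              k = k' :> nat -> alpha k = alpha' k' /\ beta k = beta' k').
Proof.
move=> a_incr a'_incr b'_inj /fin_all_exists[f fP] /fin_all_exists[g gP].
have f_inj : injective f.
  by move=> k l /(congr1 alpha'); rewrite (fP k).1 (fP l).1 => /(incr_inj a_incr).
have g_inj : injective g.
  by move=> k l /(congr1 beta); rewrite (gP k).1 (gP l).1 => /b'_inj.
have rr' : r = r'.
  move: (leq_card f f_inj) (leq_card g g_inj); rewrite !card_ord => le_rr' le_r'r.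
  by apply/anti_leq/andP.
subst r'; split=> // k _ /val_inj <-.
have f_id : f =1 id.
  apply: incr_ord_id => k' l kl.
  by rewrite -(incr_mono a'_incr) (fP k').1 (fP l).1 a_incr.
have beta_g : forall l, val (beta (g l)) = val (beta l).
  apply: (@inj_leq_eq _ (fun l => val (beta l)) _ g_inj) => l /=; rewrite (gP l).1.
  by have [_] := fP l; rewrite f_id.
split; first by have [<- _] := fP k; rewrite f_id.
by apply: val_inj; rewrite -beta_g (gP k).1.
Qed.

Lemma supp_lower_leq (R : pzRingType) n (X : 'M[R]_n) i j :
  X \in supp_in lower -> X i j != 0 -> (j <= i)%N.
Proof. by move=> /supp_inP X_low /X_low /orP[/eqP->|/ltnW]. Qed.

Lemma lower_equiv_Pi_eq m n r r' (alpha : 'I_r -> 'I_m) (beta : 'I_r -> 'I_n)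
    (alpha' : 'I_r' -> 'I_m) (beta' : 'I_r' -> 'I_n) (A : 'M[F2]_m) (B : 'M[F2]_n) :
  (forall k l : 'I_r, (k < l)%N -> (alpha k < alpha l)%N) ->
  (forall k l : 'I_r', (k < l)%N -> (alpha' k < alpha' l)%N) ->
  injective beta -> injective beta' ->
  unitri lower A -> unitri lower B ->
  A *m Pi alpha beta = Pi alpha' beta' *m B ->
  r = r' /\ (forall (k : 'I_r) (k' : 'I_r'),
              k = k' :> nat -> alpha k = alpha' k' /\ beta k = beta' k').
Proof.
move=> a_incr a'_incr b_inj b'_inj [A_low A1] [B_low B1] E.
have a'_inj := incr_inj a'_incr.
apply: index_maps_eq a_incr a'_incr b'_inj _ _ => [k|l].
  have : (Pi alpha' beta' *m B) (alpha k) (beta k) != 0.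
    by rewrite -E mulmx_Pi_col // A1 oner_neq0.
  by case/mulmx_neq0=> _ /Pi_neq0[l [a'l <-]] /(supp_lower_leq B_low); exists l.
have : (A *m Pi alpha beta) (alpha' l) (beta' l) != 0.
  by rewrite E Pi_mulmx_row // B1 oner_neq0.
case/mulmx_neq0=> i A_ne /Pi_neq0[k [ki bk]]; exists k; split=> //.
by rewrite -ki in A_ne; apply: supp_lower_leq A_low A_ne.
Qed.

Lemma Pi_stabilizer_left m n r (alpha : 'I_r -> 'I_m) (beta : 'I_r -> 'I_n)
    (A : 'M[F2]_m) (B : 'M[F2]_n) :
  (forall k l : 'I_r, (k < l)%N -> (alpha k < alpha l)%N) -> injective beta ->
  unitri (TL alpha) A -> B \in supp_in (TR beta) ->
  A *m Pi alpha beta = Pi alpha beta *m B -> A = 1%:M.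
Proof.
move=> a_incr b_inj [/supp_inP A_T A1] /supp_inP B_T E.
apply/matrixP => i j; rewrite mxE; case: eqVneq => [<-|ij]; first exact: A1.
rewrite mulr0n; apply/eqP/contraT => Aij; have := A_T i j Aij; rewrite (negbTE ij).
case/andP=> /codomP[k jk] ki; subst j.
have : (Pi alpha beta *m B) i (beta k) != 0 by rewrite -E mulmx_Pi_col.
case/mulmx_neq0=> _ /Pi_neq0[l [li <-]] /B_T; subst i.
have kl : (k < l)%N by rewrite -(incr_mono a_incr).
case/orP=> [/eqP/b_inj lk|]; first by rewrite lk ltnn in kl.
by rewrite (negbTE (TR_before b_inj kl)).
Qed.

Lemma Pi_stabilizer_right m n r (alpha : 'I_r -> 'I_m) (beta : 'I_r -> 'I_n)
    (B : 'M[F2]_n) :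
  (forall k l : 'I_r, (k < l)%N -> (alpha k < alpha l)%N) ->
  unitri (TR beta) B -> Pi alpha beta = Pi alpha beta *m B -> B = 1%:M.
Proof.
move=> a_incr [/supp_inP B_T B1] E; have a_inj := incr_inj a_incr.
apply/matrixP => i j; rewrite mxE; case: eqVneq => [<-|ij]; first exact: B1.
rewrite mulr0n; apply/eqP/contraT => Bij; have := B_T i j Bij; rewrite (negbTE ij).
case/andP=> /existsP[k /andP[/eqP bk _]] _; subst i.
have := Pi_mulmx_row beta B k j a_inj; rewrite -E Pi_row // (negbTE ij) mulr0n => B0.
by rewrite -B0 eqxx in Bij.
Qed.

Theorem theorem4 (m n r r' : nat)
  (alpha : 'I_r -> 'I_m) (beta : 'I_r -> 'I_n) (L : 'M[F2]_m) (R : 'M[F2]_n)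
  (alpha' : 'I_r' -> 'I_m) (beta' : 'I_r' -> 'I_n) (L' : 'M[F2]_m) (R' : 'M[F2]_n) :
  allowed alpha beta L R ->
  allowed alpha' beta' L' R' ->
  L *m Pi alpha beta *m R = L' *m Pi alpha' beta' *m R' ->
  [/\ r = r',
      (forall (k : 'I_r) (k' : 'I_r'), nat_of_ord k = nat_of_ord k' ->
         alpha k = alpha' k' /\ beta k = beta' k'),
      L = L' & R = R'].
Proof.
move=> [_ a_incr b_inj L_in R_in] [_ a'_incr b'_inj L'_in R'_in] E.
have L_u := in_L_unitri TL_lower L_in.
have R_u := in_L_unitri TR_lower R_in.
have R'_u := in_L_unitri TR_lower R'_in.
have [L'inv [L'inv_u L'L'inv L'invL']] :=
  unitri_inv TL_lower TL_trans (in_L_unitri TL_lower L'_in).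
have [Rinv [Rinv_u RRinv RinvR]] := unitri_inv TR_lower TR_trans R_u.
set A := L'inv *m L; set B := R' *m Rinv.
have AB : A *m Pi alpha beta = Pi alpha' beta' *m B.
  have := congr1 (fun X => L'inv *m X *m Rinv) E.
  by rewrite /= -!mulmxA RRinv mulmx1 !mulmxA L'invL' mul1mx -mulmxA.
have A_low : unitri lower A := unitri_mul (fun _ _ => id) lower_trans
  (unitri_sub TL_lower L'inv_u) (unitri_sub TL_lower L_u).
have B_low : unitri lower B := unitri_mul (fun _ _ => id) lower_trans
  (unitri_sub TR_lower R'_u) (unitri_sub TR_lower Rinv_u).
have [rr' ab_eq] := lower_equiv_Pi_eq a_incr a'_incr b_inj b'_inj A_low B_low AB.
subst r'.
have [a_eq b_eq] : alpha' = alpha /\ beta' = beta.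
  by split; apply: functional_extensionality => k; case: (ab_eq k k erefl).
subst alpha' beta'.
have A_u : unitri (TL alpha) A := unitri_mul TL_lower TL_trans L'inv_u L_u.
have B_u : unitri (TR beta) B := unitri_mul TR_lower TR_trans R'_u Rinv_u.
have A1 := Pi_stabilizer_left a_incr b_inj A_u B_u.1 AB.
have B1 : B = 1%:M by apply: (Pi_stabilizer_right a_incr B_u); rewrite -AB A1 mul1mx.
split=> //.
- by rewrite -[L]mul1mx -L'L'inv -mulmxA -/A A1 mulmx1.
- by rewrite -[R']mulmx1 -RinvR mulmxA -/B B1 mul1mx.
Qed.
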